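(* Let $x_1<x_2$, $b_1,b_2\in\mathbb{R}$ and $m>0$ with $|b_2-b_1|\leq m(x_2-x_1)$. Let $x_0=\frac12(x_1+x_2)+\frac1{2m}(b_2-b_1)\in[x_1,x_2]$ and $b_0=\frac12(b_1+b_2)+\frac12m(x_2-x_1)$. If $B$ is a Brownian bridge (diffusion parameter one) on $[x_1,x_2]$ with $B(x_1)=b_1$, $B(x_2)=b_2$, and $N$ is a standard Gaussian random variable, then $$\mathbb{P}\big(B(x_0)\geq b_0\big)\geq\mathbb{P}\big(N\geq(x_2-x_1)^{1/2}m\big).$$ *)

From HB Require Import structures.
From mathcomp Require Import all_boot all_order all_algebra.
From mathcomp Require Import all_classical all_reals all_analysis.
Set Implicit Arguments. Unset Strict Implicit. Unset Printing Implicit Defensive.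
Import Order.TTheory GRing.Theory Num.Theory.
Import numFieldTopology.Exports.
Local Open Scope classical_set_scope.
Local Open Scope ring_scope.

Definition gaussian_law d (T : measurableType d) (R : realType)
    (P : probability T R) (f : T -> R) (mu v : R) : Prop :=
  measurable_fun setT f /\ 0 <= v /\
  forall A : set R, measurable A ->
    P (f @^-1` A) = (if v == 0 then \d_mu A else normal_prob mu (Num.sqrt v) A).

Definition bb_mean (R : realType) (x1 x2 b1 b2 t : R) : R :=
  b1 + (t - x1) / (x2 - x1) * (b2 - b1).
Definition bb_cov (R : realType) (x1 x2 s t : R) : R :=
  (Num.min s t - x1) * (x2 - Num.max s t) / (x2 - x1).

(* B is a Brownian bridge on [x1,x2] with B(x1)=b1, B(x2)=b2: a Gaussian
   process (every finite linear combination of its values is Gaussian) with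
   the bridge mean and covariance, whose sample paths are continuous. *)
Definition brownian_bridge d (T : measurableType d) (R : realType)
    (P : probability T R) (x1 x2 b1 b2 : R) (B : R -> T -> R) : Prop :=
  (forall w, {within `[x1, x2]%classic, continuous (fun t : R => B t w)}) /\
  forall s : seq (R * R),
    all (fun p => p.2 \in `[x1, x2]) s ->
    gaussian_law P (fun w => \sum_(p <- s) p.1 * B p.2 w)
      (\sum_(p <- s) p.1 * bb_mean x1 x2 b1 b2 p.2)
      (\sum_(p <- s) \sum_(q <- s) p.1 * q.1 * bb_cov x1 x2 p.2 q.2).

(* B(x0) is Gaussian with mean mu = bb_mean x0 and variance
   v = (x0 - x1)(x2 - x0)/(x2 - x1) <= (x2 - x1)/4.  The point x0 and the level
   b0 are chosen so that b0 - mu = 2 m v; after standardizing,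
   P(B(x0) >= b0) = P(N >= 2 m sqrt v) >= P(N >= m sqrt (x2 - x1)). *)
From HB Require Import structures.
From mathcomp Require Import all_boot all_order all_algebra.
From mathcomp Require Import all_classical all_reals all_analysis.
From mathcomp Require Import ring lra.
Set Implicit Arguments. Unset Strict Implicit. Unset Printing Implicit Defensive.
Import Order.TTheory GRing.Theory Num.Theory.
Import numFieldTopology.Exports.
Local Open Scope classical_set_scope.
Local Open Scope ring_scope.

Section normal_tail.
Variable R : realType.

Lemma derive1_affine (mu s : R) : (fun y : R => mu + s * y)^`()%classic = cst s.
Proof.
apply/funext => x; rewrite derive1E deriveD// derive_cst add0r.
by rewrite deriveM// derive_id derive_cst scaler0 addr0 /GRing.scale /= mulr1.
Qed.

Lemma normal_pdf_affine (mu s x : R) : 0 < s ->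
  normal_pdf mu s (mu + s * x) * s = normal_pdf 0 1 x.
Proof.
move=> s0; rewrite /normal_pdf gt_eqF// oner_eq0 /normal_peak /normal_fun.
have -> : - (mu + s * x - mu) ^+ 2 / (s ^+ 2 *+ 2) = - (x - 0) ^+ 2 / (1 ^+ 2 *+ 2).
  by field; rewrite gt_eqF.
rewrite -!mulrnAr expr1n mul1r sqrtrM ?sqr_ge0// sqrtr_sqr gtr0_norm//.
have pi2_gt0 : 0 < Num.sqrt (pi *+ 2 : R) by rewrite sqrtr_gt0 mulrn_wgt0// pi_gt0.
by rewrite mul1r; field; rewrite !gt_eqF.
Qed.

Lemma normal_prob_itvcy_standardize (mu s a : R) : 0 < s ->
  normal_prob mu s `[mu + s * a, +oo[ = normal_prob 0 1 `[a, +oo[.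
Proof.
move=> s0; rewrite /normal_prob.
rewrite (@increasing_ge0_integration_by_substitutiony R (fun y => mu + s * y)).
- apply: eq_integral => x _; congr EFin.
  by rewrite derive1_affine !fctE normal_pdf_affine.
- by move=> x y _ _ xy; rewrite ltrD2l ltr_pM2l.
- by move=> x _; rewrite derive1_affine; exact: cst_continuous.
- by rewrite derive1_affine; exact: is_cvg_cst.
- by rewrite derive1_affine; exact: is_cvg_cst.
- split; first by move=> x _; apply: derivableD => //; apply: derivableM.
  apply: cvg_at_right_filter; apply: cvgD; first exact: cvg_cst.
  by apply: cvgM; [exact: cvg_cst|exact: cvg_id].
- apply/cvgryPge => A; near=> x.
  have : (A - mu) / s <= x by near: x; apply: nbhs_pinfty_ge; rewrite num_real.
  by rewrite ler_pdivrMr// => ?; lra.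
- by apply: continuous_subspaceT; exact: continuous_normal_pdf (lt0r_neq0 s0).
- by move=> x _; exact: normal_pdf_ge0.
Unshelve. all: end_near.
Qed.

Lemma gaussian_law_tail_ge d (T : measurableType d) (P : probability T R)
    (f : T -> R) (mu v b c : R) :
  gaussian_law P f mu v -> b <= mu + c * Num.sqrt v ->
  (normal_prob 0 1 [set y | (c <= y)%R] <= P [set w | (b <= f w)%R])%E.
Proof.
move=> [_ [v_ge0 lawf]] b_le.
have -> : [set w | b <= f w] = f @^-1` [set y | b <= y] by [].
rewrite lawf -?set_itvcy//; case: ifPn => [/eqP v0|v_neq0].
  rewrite v0 sqrtr0 mulr0 addr0 in b_le.
  by rewrite diracE mem_set ?probability_le1//= in_itv/= andbT.
have sv_gt0 : 0 < Num.sqrt v by rewrite sqrtr_gt0 lt_def v_neq0.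
rewrite -(normal_prob_itvcy_standardize mu c sv_gt0).
apply: le_measure; rewrite ?inE//=.
by move=> y; rewrite /= !in_itv /= !andbT; apply: le_trans; rewrite mulrC.
Qed.

End normal_tail.

Lemma brownian_bridge_marginal d (T : measurableType d) (R : realType)
    (P : probability T R) (x1 x2 b1 b2 t : R) (B : R -> T -> R) :
  brownian_bridge P x1 x2 b1 b2 B -> t \in `[x1, x2] ->
  gaussian_law P (B t) (bb_mean x1 x2 b1 b2 t) (bb_cov x1 x2 t t).
Proof.
move=> [_ gaussB] t_in; have := gaussB [:: (1, t)].
rewrite /= t_in !big_seq1 /= !mul1r; under eq_fun do rewrite big_seq1 mul1r.
by apply.
Qed.

Lemma bb_var_le_quarter (R : realType) (x1 x2 t : R) : x1 < x2 ->
  4 * bb_cov x1 x2 t t <= x2 - x1.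
Proof.
move=> x12; rewrite /bb_cov minxx maxxx mulrA ler_pdivrMr ?subr_gt0//.
have := sqr_ge0 ((t - x1) - (x2 - t)); rewrite expr2; nra.
Qed.

Theorem mainTheorem12 (R : realType) (d : measure_display) (T : measurableType d)
    (P : probability T R) (x1 x2 b1 b2 m : R) (B : R -> T -> R) :
  x1 < x2 -> 0 < m -> `|b2 - b1| <= m * (x2 - x1) ->
  brownian_bridge P x1 x2 b1 b2 B ->
  let x0 := 2^-1 * (x1 + x2) + (2 * m)^-1 * (b2 - b1) in
  let b0 := 2^-1 * (b1 + b2) + 2^-1 * m * (x2 - x1) in
  (normal_prob 0 1 [set y : R | (Num.sqrt (x2 - x1) * m <= y)%R]
     <= P [set w | (b0 <= B x0 w)%R])%E.
Proof.
move=> x12 m_gt0 /[!ler_norml] /andP[db_ge db_le] bbB; cbv zeta.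
set x0 := 2^-1 * (x1 + x2) + (2 * m)^-1 * (b2 - b1).
set b0 := 2^-1 * (b1 + b2) + 2^-1 * m * (x2 - x1).
have x0_in : x0 \in `[x1, x2].
  have x0_x1 : x0 - x1 = (m * (x2 - x1) + (b2 - b1)) / (2 * m).
    by rewrite /x0; field; rewrite gt_eqF.
  have x2_x0 : x2 - x0 = (m * (x2 - x1) - (b2 - b1)) / (2 * m).
    by rewrite /x0; field; rewrite gt_eqF.
  rewrite in_itv /= -[x1 <= x0]subr_ge0 -[x0 <= x2]subr_ge0 x0_x1 x2_x0.
  by apply/andP; split; apply: divr_ge0; lra.
apply: gaussian_law_tail_ge (brownian_bridge_marginal bbB x0_in) _.
set v := bb_cov x1 x2 x0 x0.
have -> : b0 = bb_mean x1 x2 b1 b2 x0 + 2 * m * v.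
  by rewrite /v /bb_mean /bb_cov minxx maxxx /b0 /x0; field; rewrite !gt_eqF ?subr_gt0.
rewrite lerD2l.
have v_ge0 : 0 <= v by have [_ []] := brownian_bridge_marginal bbB x0_in.
have two_sd_le : 2 * Num.sqrt v <= Num.sqrt (x2 - x1).
  rewrite -ler_sqr ?nnegrE ?mulr_ge0 ?sqrtr_ge0// exprMn !sqr_sqrtr//.
    by rewrite expr2 -natrM; exact: bb_var_le_quarter.
  by rewrite subr_ge0 ltW.
rewrite -{1}(sqr_sqrtr v_ge0) expr2 mulrA ler_wpM2r ?sqrtr_ge0//.
by rewrite mulrAC ler_pM2r.
Qed.
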